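(* Let $\{M^A_\alpha\}_{\alpha=1}^{d_A^2}$ be a GSICPOVM on $\mathbb{C}^{d_A}$ with parameter $a_A$ and $\{M^B_\beta\}_{\beta=1}^{d_B^2}$ a GSICPOVM on $\mathbb{C}^{d_B}$ with parameter $a_B$. Let $\mu,\nu\in\mathbb{R}$ and $l$ a positive integer. If a state $\rho_{AB}$ on $\mathbb{C}^{d_A}\otimes\mathbb{C}^{d_B}$ is separable, then $$\left\|\mathcal{M}^l_{\mu,\nu}(\rho_{AB})\right\|_{\mathrm{tr}}\le\sqrt{\left(l\mu^2+\frac{a_Ad_A^2+1}{d_A(d_A+1)}\right)\left(l\nu^2+\frac{a_Bd_B^2+1}{d_B(d_B+1)}\right)},$$ where $$\mathcal{M}^l_{\mu,\nu}(\rho_{AB})=\begin{pmatrix}\mu\nu J_{l\times l}&\mu\,\omega_l(\zeta)^T\\ \nu\,\omega_l(\varsigma)&\mathcal{G}(\rho_{AB})\end{pmatrix}.$$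
   Context: A GSICPOVM (general symmetric informationally complete POVM) on $\mathbb{C}^d$ is a POVM of $d^2$ positive semidefinite operators $\{M_k\}_{k=1}^{d^2}$ summing to $I_d$ with $\mathrm{tr}(M_k)=1/d$, $\mathrm{tr}(M_k^2)=a$, $\mathrm{tr}(M_kM_l)=\frac{1-da}{d(d^2-1)}$ for $l\ne k$, where $\frac1{d^3}<a\le\frac1{d^2}$. A state is separable if it is a convex combination of product states $\rho_A^i\otimes\rho_B^i$. $\rho_A,\rho_B$ are the reduced states. $\varsigma\in\mathbb{R}^{d_A^2}$ has entries $\mathrm{tr}(M^A_\alpha\rho_A)$, $\zeta\in\mathbb{R}^{d_B^2}$ has entries $\mathrm{tr}(M^B_\beta\rho_B)$, and $\mathcal{G}(\rho_{AB})$ is the $d_A^2\times d_B^2$ matrix with entries $\mathrm{tr}[(M^A_\alpha\otimes M^B_\beta)\rho_{AB}]$ (row $\alpha$, column $\beta$). $J_{l\times l}$ is the $l\times l$ all-ones matrix; for a column vector $X$, $\omega_l(X)=(X,\dots,X)$ is the matrix with $l$ columns equal to $X$. $\|G\|_{\mathrm{tr}}=\mathrm{tr}\sqrt{G^\dagger G}$. *)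

(* Complex numbers: an arbitrary numClosedFieldType C
   (e.g. complex R for a real closed field R, or algC). *)
From HB Require Import structures.
From mathcomp Require Import all_boot all_order all_algebra.
From mathcomp Require Import sesquilinear spectral.
Set Implicit Arguments. Unset Strict Implicit. Unset Printing Implicit Defensive.
Import Order.TTheory GRing.Theory Num.Theory Num.Def.
Local Open Scope ring_scope.

Section Defs.
Variable C : numClosedFieldType.

Definition adjmx m n (A : 'M[C]_(m, n)) : 'M[C]_(n, m) := map_mx conjC (A^T).

Definition psd n (A : 'M[C]_n) : Prop :=
  adjmx A = A /\ forall v : 'rV[C]_n, 0 <= (v *m A *m adjmx v) 0 0.

Definition is_state n (rho : 'M[C]_n) : Prop := psd rho /\ \tr rho = 1.

(* splitting of an index of C^m (x) C^n, consistent with mxvec_index *)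
Definition idxA m n (k : 'I_(m * n)) : 'I_m :=
  (enum_val (cast_ord (esym (mxvec_cast m n)) k)).1.
Definition idxB m n (k : 'I_(m * n)) : 'I_n :=
  (enum_val (cast_ord (esym (mxvec_cast m n)) k)).2.

Definition tensmx m n (A : 'M[C]_m) (B : 'M[C]_n) : 'M[C]_(m * n) :=
  \matrix_(i, j) (A (idxA i) (idxA j) * B (idxB i) (idxB j)).

Definition ptraceB m n (rho : 'M[C]_(m * n)) : 'M[C]_m :=
  \matrix_(i, j) \sum_(k < n) rho (mxvec_index i k) (mxvec_index j k).
Definition ptraceA m n (rho : 'M[C]_(m * n)) : 'M[C]_n :=
  \matrix_(i, j) \sum_(k < m) rho (mxvec_index k i) (mxvec_index k j).

Definition separable m n (rho : 'M[C]_(m * n)) : Prop :=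
  exists (N : nat) (p : 'I_N -> C) (rA : 'I_N -> 'M[C]_m) (rB : 'I_N -> 'M[C]_n),
    [/\ forall i, 0 <= p i, \sum_i p i = 1,
        forall i, is_state (rA i), forall i, is_state (rB i) &
        rho = \sum_i p i *: tensmx (rA i) (rB i)].

Definition GSICPOVM d (a : C) (M : 'I_(d ^ 2) -> 'M[C]_d) : Prop :=
  [/\ 1 / (d%:R ^+ 3) < a, a <= 1 / (d%:R ^+ 2),
      forall k, psd (M k) & \sum_k M k = 1%:M] /\
  [/\ forall k, \tr (M k) = 1 / d%:R,
      forall k, \tr (M k *m M k) = a &
      forall k l, k != l ->
        \tr (M k *m M l) = (1 - d%:R * a) / (d%:R * (d%:R ^+ 2 - 1))].

(* square root of a normal (in particular psd) matrix via the spectral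
   decomposition A = P^-1 diag(x) P: sqrt A = P^-1 diag(sqrt x) P *)
Definition sqrtmx n (A : 'M[C]_n) : 'M[C]_n :=
  invmx (spectralmx A) *m diag_mx (map_mx sqrtC (spectral_diag A)) *m spectralmx A.

Definition trnorm m n (G : 'M[C]_(m, n)) : C := \tr (sqrtmx (adjmx G *m G)).

Definition Jmx l : 'M[C]_l := const_mx 1.
Definition omega l n (X : 'cV[C]_n) : 'M[C]_(n, l) := \matrix_(i, j) X i 0.

Definition varsigma dA dB (MA : 'I_(dA ^ 2) -> 'M[C]_dA) (rho : 'M[C]_(dA * dB))
  : 'cV[C]_(dA ^ 2) := \col_al \tr (MA al *m ptraceB rho).
Definition zeta dA dB (MB : 'I_(dB ^ 2) -> 'M[C]_dB) (rho : 'M[C]_(dA * dB))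
  : 'cV[C]_(dB ^ 2) := \col_be \tr (MB be *m ptraceA rho).
Definition Gmx dA dB (MA : 'I_(dA ^ 2) -> 'M[C]_dA) (MB : 'I_(dB ^ 2) -> 'M[C]_dB)
  (rho : 'M[C]_(dA * dB)) : 'M[C]_(dA ^ 2, dB ^ 2) :=
  \matrix_(al, be) \tr (tensmx (MA al) (MB be) *m rho).

Definition Mlmunu l (mu nu : C) dA dB (MA : 'I_(dA ^ 2) -> 'M[C]_dA)
  (MB : 'I_(dB ^ 2) -> 'M[C]_dB) (rho : 'M[C]_(dA * dB))
  : 'M[C]_(l + dA ^ 2, l + dB ^ 2) :=
  block_mx ((mu * nu) *: Jmx l) (mu *: (omega l (zeta MB rho))^T)
           (nu *: omega l (varsigma MA rho)) (Gmx MA MB rho).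

End Defs.

(* Write the separable state as rho = sum_i p_i rA_i (x) rB_i.  The matrix
   M^l_{mu,nu}(rho) is then sum_i p_i u_i v_i, where the column u_i lists l
   copies of mu followed by the probabilities tr(M^A_al rA_i), and the row v_i
   likewise; testing against the partial isometry Q of the polar decomposition
   of X gives ||X||_tr = tr(Q^* X) <= sum_i p_i |u_i| |v_i|.
   For a GSIC-POVM with parameter a and any state r on C^d, put
   x_k = tr(M_k r) - 1/d^2, Z = sum_k x_k M_k and R = r - I/d.  The overlaps of
   the POVM give tr(Z Z) = (a - b) s and tr(Z R) = s with s = sum_k x_k^2, while
   tr(R R) = tr(r r) - 1/d <= 1 - 1/d.  Cauchy-Schwarz for the Hilbert-Schmidt
   product yields s <= (a - b)(1 - 1/d), i.e.
   sum_k tr(M_k r)^2 <= (a d^2 + 1) / (d (d + 1)), which bounds |u_i|^2 and |v_i|^2. *)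

From HB Require Import structures.
From mathcomp Require Import all_boot all_order all_algebra.
From mathcomp Require Import sesquilinear spectral.
From mathcomp Require Import ring.
Import Order.TTheory GRing.Theory Num.Theory Num.Def.
Local Open Scope ring_scope.
Local Open Scope sesquilinear_scope.
Set Implicit Arguments. Unset Strict Implicit. Unset Printing Implicit Defensive.

Section TraceNorm.
Variable C : numClosedFieldType.
Implicit Types (m n : nat).

Lemma adjmxE m n (A : 'M[C]_(m, n)) : adjmx A = A ^t*.
Proof. by []. Qed.

Lemma sum_sqnorm_ge0 (I : finType) (f : I -> C) : 0 <= \sum_i `|f i| ^+ 2.
Proof. by apply: sumr_ge0 => i _; exact: exprn_ge0. Qed.

Lemma row_sqnormE n (r : 'rV[C]_n) : (r *m r ^t*) 0 0 = \sum_k `|r 0 k| ^+ 2.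
Proof. by rewrite mxE; apply: eq_bigr => i _; rewrite !mxE normCK. Qed.

Lemma CauchySchwarz_sum n (a b : 'I_n -> C) :
  `|\sum_i a i * b i| <= sqrtC (\sum_i `|a i| ^+ 2) * sqrtC (\sum_i `|b i| ^+ 2).
Proof.
pose u : 'rV[C]_n := \row_i a i; pose v : 'rV[C]_n := \row_i (b i)^*.
have : `|dotmx u v| <= sqrtC (dotmx u u) * sqrtC (dotmx v v) :=
  (@CauchySchwarz_sqrt C _ (@dotmx C n) u v).1.
rewrite !dotmxE !row_sqnormE [in X in `|X|]mxE.
have -> : \sum_j u 0 j * (v ^t*) j 0 = \sum_i a i * b i.
  by apply: eq_bigr => i _; rewrite !mxE conjCK.
by congr (_ <= sqrtC _ * sqrtC _); apply: eq_bigr => i _; rewrite !mxE ?norm_conjC.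
Qed.

Lemma col_sqnormE n (c : 'cV[C]_n) : (c ^t* *m c) 0 0 = \sum_k `|c k 0| ^+ 2.
Proof. by rewrite mxE; apply: eq_bigr => i _; rewrite !mxE normCK mulrC. Qed.

Lemma adjmx_mul_normal m n (X : 'M[C]_(m, n)) : X ^t* *m X \is normalmx.
Proof. by apply/normalmxP; rewrite !trmx_mul !map_mxM !trmxCK. Qed.

Lemma spectral_diagonalize n (A : 'M[C]_n) : A \is normalmx ->
  spectralmx A *m A *m (spectralmx A) ^t* = diag_mx (spectral_diag A).
Proof.
move=> /orthomx_spectralP {2}->.
rewrite -invmx_unitary ?spectral_unitarymx // !mulmxA mulmxV ?spectral_unit //.
by rewrite mul1mx mulmxK ?spectral_unit.
Qed.

Lemma spectral_diagE n (A : 'M[C]_n) (k : 'I_n) : A \is normalmx ->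
  spectral_diag A 0 k = (row k (spectralmx A) *m A *m (row k (spectralmx A)) ^t*) 0 0.
Proof.
move=> /spectral_diagonalize /matrixP /(_ k k); rewrite [RHS]mxE eqxx mulr1n => <-.
rewrite !mxE; apply: eq_bigr => j _; rewrite !mxE; congr (_ * _).
by apply: eq_bigr => i _; rewrite !mxE.
Qed.

Lemma trnorm_spectralE m n (X : 'M[C]_(m, n)) :
  trnorm X = \sum_k sqrtC (spectral_diag (X ^t* *m X) 0 k).
Proof.
rewrite /trnorm /sqrtmx adjmxE invmx_unitary ?spectral_unitarymx //.
rewrite mxtrace_mulC mulmxA (unitarymxP (spectral_unitarymx _)) mul1mx.
rewrite mxtrace_diag.
by apply: eq_bigr => k _; rewrite mxE.
Qed.

Lemma adjmx_mul_rotated m n (X : 'M[C]_(m, n)) (P := spectralmx (X ^t* *m X)) :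
  (X *m P ^t*) ^t* *m (X *m P ^t*) = diag_mx (spectral_diag (X ^t* *m X)).
Proof.
rewrite -spectral_diagonalize ?adjmx_mul_normal // trmx_mul map_mxM trmxCK.
by rewrite !mulmxA.
Qed.

Lemma spectral_diag_adjmx_mul_ge0 m n (X : 'M[C]_(m, n)) k :
  0 <= spectral_diag (X ^t* *m X) 0 k.
Proof.
have /matrixP /(_ k k) := adjmx_mul_rotated X; rewrite [RHS]mxE eqxx mulr1n => <-.
rewrite mxE; apply: sumr_ge0 => j _; rewrite !mxE mulrC -normCK; exact: exprn_ge0.
Qed.

Lemma partial_isometry_bessel n k (Z : 'M[C]_(n, k)) (U : 'cV[C]_n) :
  Z *m (Z ^t* *m Z) = Z ->
  \sum_j `|(Z ^t* *m U) j 0| ^+ 2 <= \sum_j `|U j 0| ^+ 2.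
Proof.
move=> ZZZ; pose Q := 1%:M - Z *m Z ^t*.
have QC : Q ^t* = Q.
  by rewrite /Q linearB /= map_mxB trmx1 map_mx1 trmx_mul map_mxM trmxCK.
have QQ : Q *m Q = Q.
  rewrite /Q mulmxBl !mulmxBr mul1mx mulmx1 -[Z *m _ *m (Z *m _)]mulmxA.
  by rewrite [Z ^t* *m (Z *m _)]mulmxA mulmxA ZZZ mul1mx subrr subr0.
rewrite -!col_sqnormE -subr_ge0.
have -> : (U ^t* *m U) 0 0 - ((Z ^t* *m U) ^t* *m (Z ^t* *m U)) 0 0
          = ((Q *m U) ^t* *m (Q *m U)) 0 0.
  rewrite [(Q *m U)^T]trmx_mul map_mxM QC [in RHS]mulmxA -[_ *m Q *m Q]mulmxA QQ.
  rewrite [(Z ^t* *m U)^T]trmx_mul map_mxM trmxCK /Q mulmxBr mulmx1 mulmxBl !mulmxA.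
  by rewrite [RHS]mxE; congr (_ + _); rewrite [RHS]mxE.
by rewrite col_sqnormE sum_sqnorm_ge0.
Qed.

Lemma invC_sqrtC_mul (x : C) : (sqrtC x)^-1 * x = sqrtC x.
Proof.
have [s0|s0] := eqVneq (sqrtC x) 0; first by rewrite s0 invr0 mul0r.
by rewrite -[X in _ * X](sqrtCK x) expr2 mulKf.
Qed.

(* [Q] is the partial isometry of the polar decomposition [X = Q |X|]. *)
Lemma trnorm_polar m n (X : 'M[C]_(m, n)) :
  exists2 Q : 'M[C]_(m, n), Q *m (Q ^t* *m Q) = Q & trnorm X = \tr (Q ^t* *m X).
Proof.
set P := spectralmx (X ^t* *m X); set lam := spectral_diag (X ^t* *m X).
have Pu : P \is unitarymx by exact: spectral_unitarymx.
pose Y := X *m P ^t*.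
have YY : Y ^t* *m Y = diag_mx lam := adjmx_mul_rotated X.
have XY : X *m P ^t* = Y by [].
clearbody Y.
pose D := diag_mx (\row_k (sqrtC (lam 0 k))^-1).
have DC : D ^t* = D.
  rewrite tr_diag_mx map_diag_mx; congr diag_mx; apply/rowP => k; rewrite !mxE.
  rewrite fmorphV; congr (_^-1); apply/CrealP.
  by rewrite ger0_real // sqrtC_ge0 spectral_diag_adjmx_mul_ge0.
have DDlamD : D *m D *m diag_mx lam *m D = D.
  rewrite !mulmx_diag; congr diag_mx; apply/rowP => k; rewrite !mxE.
  rewrite -mulrA [lam 0 k / _]mulrC invC_sqrtC_mul; set s := sqrtC _.
  by have [->|s0] := eqVneq s 0; rewrite ?invr0 ?mul0r // divfK.
exists (Y *m D *m P).
  rewrite !trmx_mul !map_mxM DC !mulmxA mulmxtVK // -[_ *m Y ^t* *m Y]mulmxA YY.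
  by rewrite -!mulmxA; congr (Y *m _); rewrite !mulmxA DDlamD.
rewrite trnorm_spectralE !trmx_mul !map_mxM DC mxtrace_mulC !mulmxA.
rewrite XY mxtrace_mulC mulmxA YY mulmx_diag mxtrace_diag.
by apply: eq_bigr => k _; rewrite !mxE mulrC invC_sqrtC_mul.
Qed.

Lemma trnorm_ge0 m n (X : 'M[C]_(m, n)) : 0 <= trnorm X.
Proof.
rewrite trnorm_spectralE sumr_ge0 // => k _.
by rewrite sqrtC_ge0 spectral_diag_adjmx_mul_ge0.
Qed.

Lemma partial_isometry_rank1_le m n (Q : 'M[C]_(m, n)) (u : 'cV[C]_m) (v : 'rV[C]_n) :
  Q *m (Q ^t* *m Q) = Q ->
  `|\tr (Q ^t* *m (u *m v))| <=
    sqrtC (\sum_j `|u j 0| ^+ 2) * sqrtC (\sum_k `|v 0 k| ^+ 2).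
Proof.
move=> QQQ; rewrite mulmxA mxtrace_mulC trace_mx11 mxE.
apply: le_trans (CauchySchwarz_sum _ _) _; rewrite mulrC.
apply: ler_pM; rewrite ?sqrtC_ge0 ?sum_sqnorm_ge0 ?lexx //.
by rewrite ler_sqrtC ?nnegrE ?sum_sqnorm_ge0 // partial_isometry_bessel.
Qed.

Lemma trnorm_sum_rank1_le m n N (p : 'I_N -> C)
    (u : 'I_N -> 'cV[C]_m) (v : 'I_N -> 'rV[C]_n) :
  (forall i, 0 <= p i) ->
  trnorm (\sum_i p i *: (u i *m v i)) <=
    \sum_i p i * (sqrtC (\sum_j `|u i j 0| ^+ 2) * sqrtC (\sum_k `|v i 0 k| ^+ 2)).
Proof.
move=> p_ge0; rewrite -(ger0_norm (trnorm_ge0 _)).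
have [Q QQQ ->] := trnorm_polar (\sum_i p i *: (u i *m v i)).
rewrite mulmx_sumr raddf_sum /=; apply: le_trans (ler_norm_sum _ _ _) _.
apply: ler_sum => i _.
rewrite -scalemxAr mxtraceZ normrM ger0_norm //.
by rewrite ler_wpM2l // partial_isometry_rank1_le.
Qed.
End TraceNorm.

Section HermitianTrace.
Variable C : numClosedFieldType.
Implicit Types (m n : nat).

Lemma sum_mxvec_index m n (f : 'I_(m * n) -> C) :
  \sum_k f k = \sum_i \sum_j f (mxvec_index i j).
Proof.
rewrite pair_bigA /= (reindex (uncurry (@mxvec_index m n))) /=.
  by apply: eq_bigr => -[i j] _.
exact: curry_mxvec_bij.
Qed.

Lemma mxtrace_mul_adjE n (A B : 'M[C]_n) :
  \tr (A *m B ^t*) = dotmx (mxvec A) (mxvec B).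
Proof.
rewrite dotmxE mxE sum_mxvec_index; apply: eq_bigr => i _.
by rewrite mxE; apply: eq_bigr => j _; rewrite !mxE !mxvecE.
Qed.

Lemma CauchySchwarz_mxtrace n (A B : 'M[C]_n) :
  `|\tr (A *m B ^t*)| ^+ 2 <= \tr (A *m A ^t*) * \tr (B *m B ^t*).
Proof. by rewrite !mxtrace_mul_adjE; exact: (CauchySchwarz _ _ _).1. Qed.

Lemma mxtrace_adj n (A : 'M[C]_n) : \tr (A ^t*) = (\tr A)^*.
Proof. by rewrite rmorph_sum; apply: eq_bigr => i _; rewrite !mxE. Qed.

Lemma mxtrace_herm_mul_real n (A B : 'M[C]_n) : A ^t* = A -> B ^t* = B ->
  \tr (A *m B) \is Num.real.
Proof.
move=> AC BC; apply/CrealP.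
by rewrite -mxtrace_adj trmx_mul map_mxM AC BC mxtrace_mulC.
Qed.

Lemma CauchySchwarz_mxtrace_herm n (A B : 'M[C]_n) : A ^t* = A -> B ^t* = B ->
  \tr (A *m B) ^+ 2 <= \tr (A *m A) * \tr (B *m B).
Proof.
move=> AC BC; rewrite -real_normK ?mxtrace_herm_mul_real //.
by have := CauchySchwarz_mxtrace A B; rewrite !{1}BC {1}AC.
Qed.

Lemma state_purity_le1 n (rho : 'M[C]_n) : is_state rho -> \tr (rho *m rho) <= 1.
Proof.
move=> [[rhoC rho_psd] tr_rho].
have rho_normal : rho \is normalmx by apply/normalmxP; rewrite -adjmxE rhoC.
have /orthomx_spectralP rhoE := rho_normal.
set P := spectralmx rho in rhoE; set lam := spectral_diag rho in rhoE.
have lam_ge0 k : 0 <= lam 0 k by rewrite spectral_diagE // rho_psd.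
have sum_lam : \sum_k lam 0 k = 1.
  by rewrite -tr_rho rhoE mxtrace_mulC mulmxA mulmxV ?spectral_unit // mul1mx mxtrace_diag.
have -> : \tr (rho *m rho) = \sum_k lam 0 k ^+ 2.
  rewrite rhoE !mulmxA mulmxK ?spectral_unit // mxtrace_mulC !mulmxA.
  rewrite mulmxV ?spectral_unit // mul1mx mulmx_diag mxtrace_diag.
  by apply: eq_bigr => k _; rewrite mxE expr2.
rewrite -sum_lam; apply: ler_sum => k _; rewrite expr2 ler_piMr //.
by rewrite -sum_lam (bigD1 k) //= lerDl sumr_ge0.
Qed.
Lemma mxtrace_sumZl p n (A : 'M[C]_n) (f : 'I_p -> C) (B : 'I_p -> 'M[C]_n) :
  \tr ((\sum_i f i *: B i) *m A) = \sum_i f i * \tr (B i *m A).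
Proof.
rewrite mulmx_suml raddf_sum; apply: eq_bigr => i _.
by rewrite -scalemxAl; exact: mxtraceZ.
Qed.

Lemma mxtrace_sumZr p n (A : 'M[C]_n) (f : 'I_p -> C) (B : 'I_p -> 'M[C]_n) :
  \tr (A *m \sum_i f i *: B i) = \sum_i f i * \tr (A *m B i).
Proof.
rewrite mulmx_sumr raddf_sum; apply: eq_bigr => i _.
by rewrite -scalemxAr; exact: mxtraceZ.
Qed.

Lemma herm_sumZ_real p n (f : 'I_p -> C) (B : 'I_p -> 'M[C]_n) :
  (forall i, f i \is Num.real) -> (forall i, B i ^t* = B i) ->
  (\sum_i f i *: B i) ^t* = \sum_i f i *: B i.
Proof.
move=> f_real BC; apply/matrixP => i j; rewrite !mxE !summxE rmorph_sum.
apply: eq_bigr => k _; rewrite !mxE rmorphM /= (conj_Creal (f_real k)).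
by rewrite -[in RHS]BC !mxE.
Qed.

Lemma herm_sub_scalar n (A : 'M[C]_n) (c : C) : A ^t* = A -> c \is Num.real ->
  (A - c%:M) ^t* = A - c%:M.
Proof.
move=> AC c_real; apply/matrixP => i j; rewrite !mxE rmorphB rmorphMn /= eq_sym.
by rewrite (conj_Creal c_real) -[in RHS]AC !mxE.
Qed.

Lemma state_centered_sq_le n (rho : 'M[C]_n) : (0 < n)%N -> is_state rho ->
  \tr ((rho - n%:R^-1%:M) *m (rho - n%:R^-1%:M)) <= 1 - n%:R^-1.
Proof.
move=> n_gt0 rho_state; have purity := state_purity_le1 rho_state.
case: rho_state => _ tr_rho; have n_neq0 : n%:R != 0 :> C by rewrite pnatr_eq0 -lt0n.
rewrite mulmxBl !mulmxBr mul_mx_scalar mul_scalar_mx -scalar_mxM !raddfB /=.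
rewrite !mxtraceZ mxtrace_scalar tr_rho.
suff -> : - (n%:R^-1 * 1) - n%:R^-1 / n%:R *- n = 0 :> C by rewrite mulr1 addr0 lerD2r.
by rewrite opprK -[n%:R^-1 / n%:R *+ n]mulr_natr divfK // mulr1 addNr.
Qed.
End HermitianTrace.

Lemma ler_of_sqr_le_mul (R : numDomainType) (x y : R) :
  0 <= x -> 0 <= y -> x ^+ 2 <= y * x -> x <= y.
Proof.
move=> x_ge0 y_ge0; have [->|x_neq0] := eqVneq x 0; first by [].
by rewrite expr2 ler_pM2r // lt_def x_neq0.
Qed.

Lemma sum_sqr_centered (F : numFieldType) N (c : 'I_N -> F) : (0 < N)%N ->
  \sum_k c k = 1 -> \sum_k c k ^+ 2 = \sum_k (c k - N%:R^-1) ^+ 2 + N%:R^-1.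
Proof.
move=> N_gt0 sum_c; have N0 : N%:R != 0 :> F by rewrite pnatr_eq0 -lt0n.
under [in RHS]eq_bigr do rewrite sqrrB.
rewrite !big_split /= sumrN sumrMnl -mulr_suml sum_c sumr_const card_ord.
by rewrite -[_ *+ N]mulr_natr; field.
Qed.

Lemma GSICPOVM_dim_gt1 (C : numClosedFieldType) d (a : C) (M : 'I_(d ^ 2) -> 'M[C]_d) :
  GSICPOVM a M -> (1 < d)%N.
Proof.
move=> [[a_gt a_le _ _] _]; case: d M a_gt a_le => [|[|d]] M a_gt a_le //.
  by move: (lt_le_trans a_gt a_le); rewrite !expr0n /= invr0 ltxx.
by move: (lt_le_trans a_gt a_le); rewrite !expr1n ltxx.
Qed.

Section GSICPOVMBound.
Variables (C : numClosedFieldType) (d : nat) (a : C) (M : 'I_(d ^ 2) -> 'M[C]_d).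
Hypothesis HM : GSICPOVM a M.

(* the overlap [tr (M k *m M l)] for [k != l] *)
Let b : C := (1 - d%:R * a) / (d%:R * (d%:R ^+ 2 - 1)).

Let d_gt1 : (1 < d)%N := GSICPOVM_dim_gt1 HM.
Let d_gt0 : (0 < d)%N := ltnW d_gt1.
Let d_neq0 : d%:R != 0 :> C.
Proof. by rewrite pnatr_eq0 -lt0n d_gt0. Qed.
Let dS_neq0 : d%:R + 1 != 0 :> C.
Proof. by rewrite natr1 pnatr_eq0. Qed.
Let dsq1_neq0 : d%:R ^+ 2 - 1 != 0 :> C.
Proof.
rewrite subr_eq0 -natrX pnatr_eq1 -[X in _ == X](exp1n 2) eqn_sqr.
by rewrite neq_ltn d_gt1 orbT.
Qed.

Lemma GSICPOVM_herm k : (M k) ^t* = M k.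
Proof. by case: HM => [[_ _ /(_ k) []]]. Qed.

Lemma GSICPOVM_gap_ge0 : 0 <= a - b.
Proof.
case: HM => [[a_gt _ _ _] _].
have -> : a - b = (a * d%:R ^+ 3 - 1) / (d%:R * (d%:R ^+ 2 - 1)).
  by rewrite /b; field; rewrite dsq1_neq0 d_neq0.
apply: divr_ge0.
  by rewrite subr_ge0 ltW // -ltr_pdivrMr // exprn_gt0 // ltr0n.
by rewrite mulr_ge0 ?ler0n // subr_ge0 -natrX ler1n expn_gt0 d_gt0.
Qed.

Lemma GSICPOVM_purity_bound_ge0 : 0 <= (a * d%:R ^+ 2 + 1) / (d%:R * (d%:R + 1)).
Proof.
case: HM => [[a_gt _ _ _] _]; have a_ge0 : 0 <= a.
  by apply: le_trans (ltW a_gt); rewrite divr_ge0 ?exprn_ge0 ?ler0n.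
by rewrite divr_ge0 ?addr_ge0 ?mulr_ge0 ?exprn_ge0 ?ler0n ?ler01 ?addr_ge0.
Qed.

Lemma mxtrace_GSICPOVM_comb_sq (x : 'I_(d ^ 2) -> C) : \sum_k x k = 0 ->
  \tr ((\sum_k x k *: M k) *m (\sum_k x k *: M k)) = (a - b) * \sum_k x k ^+ 2.
Proof.
case: HM => [_ [_ M_sq M_offdiag]] sum_x.
rewrite mxtrace_sumZl mulr_sumr; apply: eq_bigr => k _.
rewrite mxtrace_sumZr (bigD1 k) //= M_sq.
rewrite (eq_bigr (fun l => x l * b)) => [|l lk]; last by rewrite M_offdiag // eq_sym.
rewrite -mulr_suml.
have -> : \sum_(l | l != k) x l = - x k.
  by apply/eqP; move: sum_x; rewrite (bigD1 k) //= addrC => /eqP; rewrite addr_eq0.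
by rewrite expr2; ring.
Qed.

Lemma GSICPOVM_prob_sq_le (rho : 'M[C]_d) : is_state rho ->
  \sum_k `|\tr (M k *m rho)| ^+ 2 <= (a * d%:R ^+ 2 + 1) / (d%:R * (d%:R + 1)).
Proof.
move=> rho_state; have RR_le := state_centered_sq_le d_gt0 rho_state.
case: rho_state => [[rhoC _] tr_rho]; case: HM => [[_ _ _ M_sum] [M_tr _ _]].
pose p k := \tr (M k *m rho).
have p_real k : p k \is Num.real by rewrite mxtrace_herm_mul_real ?GSICPOVM_herm.
have sum_p : \sum_k p k = 1 by rewrite -raddf_sum /= -mulmx_suml M_sum mul1mx.
have dsq_gt0 : (0 < d ^ 2)%N by rewrite expn_gt0 d_gt0.
pose x k := p k - (d ^ 2)%:R^-1.
have x_real k : x k \is Num.real by rewrite rpredB ?rpredV ?realn.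
have sum_x : \sum_k x k = 0.
  by rewrite sumrB sum_p sumr_const card_ord -[_ *+ _]mulr_natr mulVf ?subrr ?pnatr_eq0 -?lt0n.
pose s := \sum_k x k ^+ 2.
have s_ge0 : 0 <= s by apply: sumr_ge0 => k _; rewrite -real_normK ?exprn_ge0.
pose Z := \sum_k x k *: M k; pose R := rho - d%:R^-1%:M.
have trZR : \tr (Z *m R) = s.
  rewrite mxtrace_sumZl; apply: eq_bigr => k _.
  rewrite mulmxBr raddfB /= mul_mx_scalar mxtraceZ M_tr.
  by rewrite expr2; congr (_ * _); rewrite /x natrX; congr (_ - _); field.
have s_le : s <= (a - b) * (1 - d%:R^-1).
  have gap_ge0 := GSICPOVM_gap_ge0.
  apply: (ler_of_sqr_le_mul s_ge0).
    by rewrite mulr_ge0 // subr_ge0 invf_le1 ?ler1n ?ltr0n.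
  rewrite -{1}trZR; apply: le_trans (CauchySchwarz_mxtrace_herm _ _) _.
  - exact: herm_sumZ_real x_real GSICPOVM_herm.
  - by rewrite herm_sub_scalar ?rpredV ?realn.
  by rewrite mxtrace_GSICPOVM_comb_sq // mulrAC ler_wpM2r // ler_wpM2l.
under eq_bigr do rewrite (real_normK (p_real _)).
rewrite (sum_sqr_centered dsq_gt0 sum_p).
have -> : (a * d%:R ^+ 2 + 1) / (d%:R * (d%:R + 1)) =
          (a - b) * (1 - d%:R^-1) + (d ^ 2)%:R^-1.
  by rewrite /b natrX; field; rewrite dsq1_neq0 dS_neq0 d_neq0.
by rewrite lerD2r.
Qed.
End GSICPOVMBound.

Section Tensor.
Variable C : numClosedFieldType.
Implicit Types (m n N : nat).

Lemma idxA_mxvec_index m n (i : 'I_m) (j : 'I_n) : idxA (mxvec_index i j) = i.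
Proof. by rewrite /idxA /mxvec_index cast_ordK enum_rankK. Qed.

Lemma idxB_mxvec_index m n (i : 'I_m) (j : 'I_n) : idxB (mxvec_index i j) = j.
Proof. by rewrite /idxB /mxvec_index cast_ordK enum_rankK. Qed.

Lemma mxtrace_tensmx_mul m n (A A' : 'M[C]_m) (B B' : 'M[C]_n) :
  \tr (tensmx A B *m tensmx A' B') = \tr (A *m A') * \tr (B *m B').
Proof.
rewrite /mxtrace sum_mxvec_index mulr_suml; apply: eq_bigr => i _.
rewrite mulr_sumr; apply: eq_bigr => j _.
rewrite mxE sum_mxvec_index [(A *m A') i i]mxE [(B *m B') j j]mxE mulr_suml.
apply: eq_bigr => i' _; rewrite mulr_sumr; apply: eq_bigr => j' _.
by rewrite !mxE !idxA_mxvec_index !idxB_mxvec_index; ring.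
Qed.

Lemma ptraceB_tensmx m n (A : 'M[C]_m) (B : 'M[C]_n) :
  ptraceB (tensmx A B) = \tr B *: A.
Proof.
apply/matrixP => i j; rewrite !mxE /mxtrace mulr_suml.
by apply: eq_bigr => k _; rewrite !mxE !idxA_mxvec_index !idxB_mxvec_index mulrC.
Qed.

Lemma ptraceA_tensmx m n (A : 'M[C]_m) (B : 'M[C]_n) :
  ptraceA (tensmx A B) = \tr A *: B.
Proof.
apply/matrixP => i j; rewrite !mxE /mxtrace mulr_suml.
by apply: eq_bigr => k _; rewrite !mxE !idxA_mxvec_index !idxB_mxvec_index.
Qed.

Lemma ptraceB_sumZ N m n (p : 'I_N -> C) (T : 'I_N -> 'M[C]_(m * n)) :
  ptraceB (\sum_i p i *: T i) = \sum_i p i *: ptraceB (T i).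
Proof.
apply/matrixP => a b; rewrite !mxE summxE.
under eq_bigr do rewrite summxE.
rewrite exchange_big /=; apply: eq_bigr => i _.
by rewrite !mxE mulr_sumr; apply: eq_bigr => k _; rewrite !mxE.
Qed.

Lemma ptraceA_sumZ N m n (p : 'I_N -> C) (T : 'I_N -> 'M[C]_(m * n)) :
  ptraceA (\sum_i p i *: T i) = \sum_i p i *: ptraceA (T i).
Proof.
apply/matrixP => a b; rewrite !mxE summxE.
under eq_bigr do rewrite summxE.
rewrite exchange_big /=; apply: eq_bigr => i _.
by rewrite !mxE mulr_sumr; apply: eq_bigr => k _; rewrite !mxE.
Qed.
End Tensor.

Section SeparableDecomposition.
Variables (C : numClosedFieldType) (l dA dB : nat) (mu nu : C).
Variables (MA : 'I_(dA ^ 2) -> 'M[C]_dA) (MB : 'I_(dB ^ 2) -> 'M[C]_dB).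

(* [aug_prob_col rA *m aug_prob_row rB] is the matrix [Mlmunu] of the product state [rA (x) rB]. *)
Definition aug_prob_col (r : 'M[C]_dA) : 'cV[C]_(l + dA ^ 2) :=
  col_mx (const_mx mu) (\col_al \tr (MA al *m r)).
Definition aug_prob_row (r : 'M[C]_dB) : 'rV[C]_(l + dB ^ 2) :=
  row_mx (const_mx nu) (\row_be \tr (MB be *m r)).

Lemma Mlmunu_separable N (p : 'I_N -> C) (rA : 'I_N -> 'M[C]_dA) (rB : 'I_N -> 'M[C]_dB) :
  \sum_i p i = 1 -> (forall i, \tr (rA i) = 1) -> (forall i, \tr (rB i) = 1) ->
  Mlmunu l mu nu MA MB (\sum_i p i *: tensmx (rA i) (rB i)) =
  \sum_i p i *: (aug_prob_col (rA i) *m aug_prob_row (rB i)).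
Proof.
move=> sum_p trA trB; set rho := \sum_i _.
have ptB : ptraceB rho = \sum_i p i *: rA i.
  by rewrite ptraceB_sumZ; apply: eq_bigr => i _; rewrite ptraceB_tensmx trB scale1r.
have ptA : ptraceA rho = \sum_i p i *: rB i.
  by rewrite ptraceA_sumZ; apply: eq_bigr => i _; rewrite ptraceA_tensmx trA scale1r.
apply/matrixP => j k; rewrite summxE.
under eq_bigr do rewrite mxE [(_ *m _) j k]mxE big_ord1.
rewrite /Mlmunu /aug_prob_col /aug_prob_row.
case: (split_ordP j) => j' ->; case: (split_ordP k) => k' ->.
- rewrite block_mxEul !mxE mulr1 -[LHS]mul1r -sum_p mulr_suml.
  by apply: eq_bigr => i _; rewrite col_mxEu row_mxEl !mxE.
- rewrite block_mxEur !mxE ptA mxtrace_sumZr mulr_sumr.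
  by apply: eq_bigr => i _; rewrite col_mxEu row_mxEr !mxE mulrCA.
- rewrite block_mxEdl !mxE ptB mxtrace_sumZr mulr_sumr.
  by apply: eq_bigr => i _; rewrite col_mxEd row_mxEl !mxE mulrCA [nu * _]mulrC.
- rewrite block_mxEdr mxE mxtrace_sumZr.
  by apply: eq_bigr => i _; rewrite col_mxEd row_mxEr !mxE mxtrace_tensmx_mul.
Qed.

Lemma aug_prob_col_sqnorm (r : 'M[C]_dA) : mu \is Num.real ->
  \sum_j `|aug_prob_col r j 0| ^+ 2 =
    l%:R * mu ^+ 2 + \sum_al `|\tr (MA al *m r)| ^+ 2.
Proof.
move=> mu_real; rewrite big_split_ord /=.
under eq_bigr do rewrite col_mxEu mxE.
under [X in _ + X]eq_bigr do rewrite col_mxEd mxE.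
by rewrite sumr_const card_ord real_normK // mulr_natl.
Qed.

Lemma aug_prob_row_sqnorm (r : 'M[C]_dB) : nu \is Num.real ->
  \sum_k `|aug_prob_row r 0 k| ^+ 2 =
    l%:R * nu ^+ 2 + \sum_be `|\tr (MB be *m r)| ^+ 2.
Proof.
move=> nu_real; rewrite big_split_ord /=.
under eq_bigr do rewrite row_mxEl mxE.
under [X in _ + X]eq_bigr do rewrite row_mxEr mxE.
by rewrite sumr_const card_ord real_normK // mulr_natl.
Qed.
End SeparableDecomposition.

Unset Implicit Arguments. Set Strict Implicit.

Theorem corollary1 (C : numClosedFieldType) (dA dB : nat) (aA aB : C)
  (MA : 'I_(dA ^ 2) -> 'M[C]_dA) (MB : 'I_(dB ^ 2) -> 'M[C]_dB)
  (mu nu : C) (l : nat) (rho : 'M[C]_(dA * dB)) :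
  GSICPOVM aA MA -> GSICPOVM aB MB ->
  mu \is Num.real -> nu \is Num.real -> (0 < l)%N ->
  is_state rho -> separable rho ->
  trnorm (Mlmunu l mu nu MA MB rho) <=
  sqrtC ((l%:R * mu ^+ 2 + (aA * dA%:R ^+ 2 + 1) / (dA%:R * (dA%:R + 1))) *
         (l%:R * nu ^+ 2 + (aB * dB%:R ^+ 2 + 1) / (dB%:R * (dB%:R + 1)))).
Proof.
move=> HA HB mu_real nu_real _ _ [N [p [rA [rB [p_ge0 sum_p rA_state rB_state ->]]]]].
rewrite (Mlmunu_separable _ _ _ _ _ sum_p (fun i => (rA_state i).2)
                                         (fun i => (rB_state i).2)).
apply: le_trans (trnorm_sum_rank1_le _ _ p_ge0) _.
have sq_ge0 (x : C) : x \is Num.real -> 0 <= l%:R * x ^+ 2.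
  by move=> x_real; rewrite -real_normK // mulr_ge0 ?ler0n ?exprn_ge0.
have LA_ge0 := addr_ge0 (sq_ge0 _ mu_real) (GSICPOVM_purity_bound_ge0 HA).
have LB_ge0 := addr_ge0 (sq_ge0 _ nu_real) (GSICPOVM_purity_bound_ge0 HB).
rewrite sqrtCM ?nnegrE //.
set T := sqrtC _ * sqrtC _; rewrite -[T]mul1r -sum_p mulr_suml /T.
apply: ler_sum => i _; rewrite ler_wpM2l // ler_pM ?sqrtC_ge0 ?sum_sqnorm_ge0 //.
  by rewrite ler_sqrtC ?nnegrE ?sum_sqnorm_ge0 // aug_prob_col_sqnorm // lerD2l
    (GSICPOVM_prob_sq_le HA).
by rewrite ler_sqrtC ?nnegrE ?sum_sqnorm_ge0 // aug_prob_row_sqnorm // lerD2l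
  (GSICPOVM_prob_sq_le HB).
Qed.
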